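(* Let $H \le G$ be finite groups such that the interval $[H,G]$ is top Boolean. Then $[H,G]$ is $H$-cyclic, i.e. there exists $g \in G$ with $\langle H, g\rangle = G$.
   Context: The interval $[H,G]$ is the lattice of subgroups $K$ with $H \le K \le G$ (meet = intersection, join = generated subgroup). Its coatoms are the maximal elements of $[H,G]$ strictly below $G$. The top interval of $[H,G]$ is $[T,G]$ where $T$ is the intersection (meet) of all coatoms. A finite lattice is Boolean if it is isomorphic to the lattice of all subsets of a finite set; $[H,G]$ is top Boolean if its top interval is Boolean. $[H,G]$ is called $H$-cyclic if there is $g \in G$ with $\langle H,g\rangle = G$. *)

From mathcomp Require Import all_boot all_fingroup.
Set Implicit Arguments. Unset Strict Implicit. Unset Printing Implicit Defensive.
Local Open Scope group_scope.

Definition coatom (gT : finGroupType) (H G M : {group gT}) : bool :=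
  [&& H \subset M, M \proper G &
      [forall K : {group gT},
         ((M \subset K) && (K \subset G) && (H \subset K)) ==> ((K :==: M) || (K :==: G))]].

(* The bottom T of the top interval [T,G]: the meet of all coatoms
   (the empty meet is the top element G). *)
Definition top_bottom (gT : finGroupType) (H G : {group gT}) : {set gT} :=
  G :&: \bigcap_(M : {group gT} | coatom H G M) M.

(* The interval [A,G] of subgroups K with A <= K <= G is Boolean: it is
   lattice-isomorphic to the power set of {0,...,n-1} for some n.  A lattice
   isomorphism is given as an order isomorphism (bijection preserving and
   reflecting inclusion). *)
Definition boolean_interval (gT : finGroupType) (A : {set gT}) (G : {group gT}) : Prop :=
  exists n : nat, exists f : {set 'I_n} -> {group gT},
    [/\ forall X : {set 'I_n}, (A \subset f X) && (f X \subset G),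
        forall K : {group gT}, A \subset K -> K \subset G -> exists X, f X = K
      & forall X Y : {set 'I_n}, (X \subset Y) = (f X \subset f Y)].

Definition top_boolean (gT : finGroupType) (H G : {group gT}) : Prop :=
  boolean_interval (top_bottom H G) G.

(* The coatoms of [H,G] all contain T, so each lies in a coatom f(~{i}) of
   the Boolean lattice [T,G] = f(2^n).  Choosing x_i in the atom
   f{i} but not in f(~{i}), the product g of the x_i lies in no coatom, since
   x_j is in f(~{i}) precisely for j <> i.  A proper subgroup of G containing
   H and g would lie in some coatom, so <<H, g>> = G. *)

From mathcomp Require Import all_boot all_fingroup.
Set Implicit Arguments. Unset Strict Implicit. Unset Printing Implicit Defensive.
Local Open Scope group_scope.

Lemma prod_notin_group (gT : finGroupType) (B : {group gT}) (I : eqType)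
    (r : seq I) (F : I -> gT) (i : I) :
  uniq r -> i \in r -> F i \notin B -> {in r, forall j, j != i -> F j \in B} ->
  \prod_(j <- r) F j \notin B.
Proof.
move=> Ur ir; case/splitPr: ir Ur => r1 r2.
rewrite cat_uniq /= negb_or => /and4P[_ /andP[i_r1 _] i_r2 _] FiB FB.
have prodB r' : i \notin r' -> {subset r' <= r1 ++ i :: r2} ->
    \prod_(j <- r') F j \in B.
  move=> i_r' sr'; rewrite big_seq; apply: group_prod => j jr'.
  by apply: FB; [exact: sr' | apply: contraNneq i_r' => <-].
rewrite big_cat big_cons /= groupMl ?groupMr // prodB // => j jr;
  by rewrite mem_cat ?inE jr ?orbT.
Qed.

Section Coatoms.

Variables (gT : finGroupType) (H G : {group gT}).

Lemma coatom_proper (M : {group gT}) : coatom H G M -> M \proper G.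
Proof. by case/and3P. Qed.

Lemma top_bottom_sub_coatom (M : {group gT}) :
  coatom H G M -> top_bottom H G \subset M.
Proof. by move=> cM; rewrite subIset // (bigcap_inf M) ?orbT. Qed.

Lemma proper_sub_coatom (K : {group gT}) :
  H \subset K -> K \proper G -> exists2 M : {group gT}, coatom H G M & K \subset M.
Proof.
move=> sHK pKG.
have [M /maxgroupP[/andP[sKM pMG] maxM] _] :=
  @maxgroup_exists _ (fun M : {group gT} => (K \subset M) && (M \proper G)) K
    (introT andP (conj (subxx _) pKG)).
exists M => //; rewrite /coatom pMG (subset_trans sHK sKM) /=.
apply/forallP => L; apply/implyP => /andP[/andP[sML sLG] _].
have [sGL | nsGL] := boolP (G \subset L); first by rewrite orbC eqEsubset sLG sGL.
by rewrite (maxM L) ?eqxx // (subset_trans sKM sML) properE sLG.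
Qed.

Lemma gen_outside_coatoms (g : gT) :
    H \subset G -> g \in G ->
    (forall M : {group gT}, coatom H G M -> g \notin M) ->
  << H :|: [set g] >> = G.
Proof.
move=> sHG Gg gM; set K := << _ >>.
have sKG : K \subset G by rewrite gen_subG subUset sHG sub1set.
apply/eqP; rewrite eqEsubset sKG; apply: contraT => nsGK.
have sHK : H \subset K := subset_trans (subsetUl _ _) (subset_gen _).
have pKG : K \proper G by rewrite properE sKG.
have [M cM sKM] := @proper_sub_coatom [group of K] sHK pKG.
by move: (gM M cM); rewrite (subsetP sKM) // mem_gen // !inE eqxx orbT.
Qed.

End Coatoms.

Section BooleanInterval.

Variables (gT : finGroupType) (A : {set gT}) (G : {group gT}) (n : nat).
Variable f : {set 'I_n} -> {group gT}.
Hypothesis f_in : forall X : {set 'I_n}, (A \subset f X) && (f X \subset G).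
Hypothesis f_onto : forall K : {group gT},
  A \subset K -> K \subset G -> exists X, f X = K.
Hypothesis f_mono : forall X Y : {set 'I_n}, (X \subset Y) = (f X \subset f Y).

Lemma boolean_subG X : f X \subset G.
Proof. by case/andP: (f_in X). Qed.

Lemma boolean_top : G \subset f setT.
Proof.
have /andP[sAf0 sf0G] := f_in set0.
by have [Y <-] := f_onto (subset_trans sAf0 sf0G) (subxx G); rewrite -f_mono subsetT.
Qed.

Lemma boolean_atom_sub_coatom (i j : 'I_n) :
  (f [set j] \subset f (~: [set i])) = (j != i).
Proof. by rewrite -f_mono sub1set !inE. Qed.

Lemma boolean_proper_sub_coatom (M : {group gT}) :
  A \subset M -> M \proper G -> exists i, M \subset f (~: [set i]).
Proof.
move=> sAM /andP[sMG nsGM]; have [X fX] := f_onto sAM sMG.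
have [i _ iX] : exists2 i, i \in setT & i \notin X.
  apply/subsetPn; apply: contra nsGM => sTX.
  by rewrite -fX (subset_trans boolean_top) // -f_mono.
by exists i; rewrite -fX -f_mono subsetC sub1set inE.
Qed.

Lemma boolean_generic_element :
  exists2 g, g \in G & forall i, g \notin f (~: [set i]).
Proof.
have /fin_all_exists[x x_atom] i : exists x, x \in f [set i] :\: f (~: [set i]).
  by apply/set0Pn; rewrite setD_eq0 boolean_atom_sub_coatom eqxx.
exists (\prod_(j <- enum 'I_n) x j).
  apply: group_prod => j _; have /setDP[xj _] := x_atom j.
  exact: subsetP (boolean_subG _) _ xj.
move=> i; apply: prod_notin_group (enum_uniq _) (mem_enum _ i) _ _ => [|j _ ji].
  by have /setDP[] := x_atom i.
have /setDP[xj _] := x_atom j.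
by apply: subsetP xj; rewrite boolean_atom_sub_coatom.
Qed.

End BooleanInterval.

Theorem theorem2p4 (gT : finGroupType) (H G : {group gT}) :
  H \subset G -> top_boolean H G ->
  exists2 g, g \in G & << H :|: [set g] >> = G.
Proof.
move=> sHG [n [f [f_in f_onto f_mono]]].
have [g Gg g_generic] := boolean_generic_element f_in f_mono.
exists g => //; apply: gen_outside_coatoms => // M cM.
have [i sMi] := boolean_proper_sub_coatom f_in f_onto f_mono
  (top_bottom_sub_coatom cM) (coatom_proper cM).
exact: contra (subsetP sMi g) (g_generic i).
Qed.
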